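(* Let $f,g_1,\dots,g_m,h_1,\dots,h_l\in\mathbb{R}[\mathbf{x}]$ and consider the POP of minimizing $f$ over $S(g)\cap V(h)$. If for every integer $k\ge k_{\min}$ the linear program $(\mathrm{LP}_k)$ has a feasible solution $(\xi_k,(\mathbf{G}_{i,k})_{i\in\{0\}\cup[m]},(\mathbf{u}_{j,k})_{j\in[l]})$, then the POP has the constant trace property with $a_k=\xi_k$ and $\mathbf{P}_k=\mathrm{diag}(\mathbf{G}_{0,k}^{1/2},\dots,\mathbf{G}_{m,k}^{1/2})$ for every $k\ge k_{\min}$.
   Context: $\mathbf{x}=(x_1,\dots,x_n)$; $\lceil p\rceil:=\lceil\deg(p)/2\rceil$; $\mathbb{N}^n_d:=\{\alpha\in\mathbb{N}^n:|\alpha|\le d\}$; $s(d):=\binom{n+d}{n}$; $\mathbf{v}_d=(\mathbf{x}^\alpha)_{\alpha\in\mathbb{N}^n_d}$; $S(g)=\{\mathbf{x}:g_i(\mathbf{x})\ge0\}$, $V(h)=\{\mathbf{x}:h_j(\mathbf{x})=0\}$; $k_{\min}:=\max\{\lceil f\rceil,\lceil g_i\rceil,\lceil h_j\rceil\}$. $(\mathrm{LP}_k)$: minimize $\xi$ over $\xi\in\mathbb{R}$, real diagonal matrices $\mathbf{G}_0$ of size $s(k)$ and $\mathbf{G}_i$ of size $s(k-\lceil g_i\rceil)$ ($i\in[m]$), and vectors $\mathbf{u}_j\in\mathbb{R}^{s(2(k-\lceil h_j\rceil))}$, subject to $\mathbf{G}_i-\mathbf{I}\succeq0$ for $i\in\{0\}\cup[m]$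 ($\mathbf{I}$ the identity of the corresponding size) and the polynomial identity $\xi=\mathbf{v}_k^\top\mathbf{G}_0\mathbf{v}_k+\sum_{i\in[m]}g_i\mathbf{v}_{k-\lceil g_i\rceil}^\top\mathbf{G}_i\mathbf{v}_{k-\lceil g_i\rceil}+\sum_{j\in[l]}h_j\mathbf{v}_{2(k-\lceil h_j\rceil)}^\top\mathbf{u}_j$. Moment/localizing matrices for $\mathbf{y}=(y_\alpha)_{\alpha\in\mathbb{N}^n_{2k}}$: $\mathbf{M}_d(\mathbf{y})=(y_{\alpha+\beta})_{\alpha,\beta\in\mathbb{N}^n_d}$, $\mathbf{M}_d(q\mathbf{y})=(\sum_\gamma q_\gamma y_{\alpha+\beta+\gamma})_{\alpha,\beta\in\mathbb{N}^n_d}$. $\mathcal{S}_k$: real symmetric block-diagonal matrices $\mathrm{diag}(\mathbf{X}_0,\dots,\mathbf{X}_m)$, $\mathbf{X}_0$ of size $s(k)$, $\mathbf{X}_i$ of size $s(k-\lceil g_i\rceil)$; $\mathbf{D}_k(\mathbf{y}):=\mathrm{diag}(\mathbf{M}_k(\mathbf{y}),\mathbf{M}_{k-\lceil g_1\rceil}(g_1\mathbf{y}),\dots,\mathbf{M}_{k-\lceil g_m\rceil}(g_m\mathbf{y}))$. CTP with constants $a_k>0$ and positive definite $\mathbf{P}_k\in\mathcal{S}_k$ means: every $\mathbf{y}\in\mathbb{R}^{s(2k)}$ with $\mathbf{M}_{k-\lceil h_j\rceil}(h_j\mathbf{y})=0$ ($j\in[l]$) and $y_{\mathbf{0}}=1$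 satisfies $\mathrm{trace}(\mathbf{P}_k\mathbf{D}_k(\mathbf{y})\mathbf{P}_k)=a_k$, for all $k\ge k_{\min}$. *)

(* MathComp + multinomials (mpoly).  Real numbers: an arbitrary real
   closed field R (the statement is purely algebraic; R = the reals is a special case). *)
From HB Require Import structures.
From mathcomp Require Import all_boot all_order all_algebra.
From mathcomp Require Import mpoly.
Set Implicit Arguments. Unset Strict Implicit. Unset Printing Implicit Defensive.
Import Order.TTheory GRing.Theory Num.Theory.
Local Open Scope ring_scope.

Section POP.
Variables (R : rcfType) (n : nat).
Local Notation poly := {mpoly R[n]}.

(* deg(p) = largest total degree of a monomial of p (deg 0 := 0) *)
Definition pdeg (p : poly) : nat := (msize p).-1.
Definition hdeg (p : poly) : nat := uphalf (pdeg p).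

(* N^n_d is 'X_{1..n < d.+1}; s(d) = #|N^n_d| *)
Definition sdim (d : nat) : nat := #|{: 'X_{1..n < d.+1}}|.
(* the monomial exponent alpha indexing row/column i of a matrix of size s(d) *)
Definition mon (d : nat) (i : 'I_(sdim d)) : 'X_{1..n} :=
  bmnm (@enum_val _ (mem {: 'X_{1..n < d.+1}}) i).

Definition quadp d (G : 'M[R]_(sdim d)) : poly :=
  \sum_(i < sdim d) \sum_(j < sdim d) G i j *: 'X_[mon i + mon j].
Definition linp d (u : 'cV[R]_(sdim d)) : poly :=
  \sum_(i < sdim d) u i 0 *: 'X_[mon i].

Definition psd m (A : 'M[R]_m) : Prop :=
  A^T = A /\ forall v : 'cV[R]_m, 0 <= (v^T *m A *m v) 0 0.
Definition pd m (A : 'M[R]_m) : Prop :=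
  A^T = A /\ forall v : 'cV[R]_m, v != 0 -> 0 < (v^T *m A *m v) 0 0.

Definition sqrt_diag m (G : 'M[R]_m) : 'M[R]_m :=
  diag_mx (\row_j Num.sqrt (G j j)).

Variables (m l : nat) (f : poly) (g : 'I_m -> poly) (h : 'I_l -> poly).

(* blocks indexed by {0} \cup [m]: block 0 uses the polynomial 1 (so that
   M_k(1 y) = M_k(y)), block i+1 uses g_{i+1} *)
Definition gx (i : 'I_m.+1) : poly :=
  if unlift ord0 i is Some i' then g i' else 1.
Definition cg (i : 'I_m.+1) : nat :=
  if unlift ord0 i is Some i' then hdeg (g i') else 0%N.

Definition kmin : nat :=
  maxn (hdeg f) (maxn (\max_(i < m) hdeg (g i)) (\max_(j < l) hdeg (h j))).

Definition LP_feasible (k : nat) (xi : R)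
  (G : forall i : 'I_m.+1, 'M[R]_(sdim (k - cg i)))
  (u : forall j : 'I_l, 'cV[R]_(sdim (2 * (k - hdeg (h j))))) : Prop :=
  [/\ forall i, is_diag_mx (G i),
      forall i, psd (G i - 1%:M) &
      xi%:MP = \sum_(i < m.+1) gx i * quadp (G i)
               + \sum_(j < l) h j * linp (u j)].

(* y in R^{s(2k)}, indexed by N^n_{2k}; extended by 0 (values outside N^n_{2k}
   are never used below because of degree bounds) *)
Definition yext k (y : 'X_{1..n < (2 * k).+1} -> R) (a : 'X_{1..n}) : R :=
  odflt 0 (omap y (insub a)).

Definition locmx k (y : 'X_{1..n < (2 * k).+1} -> R) d (q : poly)
  : 'M[R]_(sdim d) :=
  \matrix_(i, j) \sum_(c <- msupp q) q@_c * yext y (mon i + mon j + c).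

Definition Dmx k (y : 'X_{1..n < (2 * k).+1} -> R)
  : 'M[R]_(\sum_(i < m.+1) sdim (k - cg i)) :=
  \mxdiag_(i < m.+1) locmx y (k - cg i) (gx i).

Definition CTP (a : nat -> R)
  (P : forall k, 'M[R]_(\sum_(i < m.+1) sdim (k - cg i))) : Prop :=
  forall k, (kmin <= k)%N ->
    [/\ 0 < a k, pd (P k) &
      forall y : 'X_{1..n < (2 * k).+1} -> R,
        (forall j : 'I_l, locmx y (k - hdeg (h j)) (h j) = 0) ->
        yext y 0%MM = 1 ->
        \tr (P k *m Dmx y *m P k) = a k].

End POP.

Arguments LP_feasible {R n m l} g h k xi G u.
Arguments CTP {R n m l} f g h a P.
Arguments kmin {R n m l} f g h.

From HB Require Import structures.
From mathcomp Require Import all_boot all_order all_algebra.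
From mathcomp Require Import ssrcomplements mpoly.
Import Order.TTheory GRing.Theory Num.Theory.
Local Open Scope ring_scope.
Set Implicit Arguments. Unset Strict Implicit.

(* Apply the certificate xi = sum_i g_i v^T G_i v + sum_j h_j v^T u_j of
   (LP_k) to a truncated pseudo-moment vector y through its Riesz functional
   L_y.  A monomial of degree <= 2d splits as alpha + beta with |alpha|,
   |beta| <= d, so L_y(h_j x^gamma) is an entry of M_d(h_j y) = 0 and the
   h_j-terms vanish; since G_i is diagonal, L_y(g_i v^T G_i v) is
   sum_a (G_i)_aa M(g_i y)_aa = tr(G_i^(1/2) M(g_i y) G_i^(1/2)).  Hence the
   trace equals L_y(xi) = xi y_0 = xi.  Evaluating the same identity at a
   point of S(g) /\ V(h) shows xi >= (G_0)_00 >= 1 > 0. *)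

Section Monomials.
Variable n : nat.

Lemma mdeg_mon d (i : 'I_(sdim n d)) : (mdeg (mon i) <= d)%N.
Proof. by rewrite /mon; case: (enum_val i). Qed.

Lemma mon_surj d (a : 'X_{1..n}) :
  (mdeg a <= d)%N -> exists i : 'I_(sdim n d), mon i = a.
Proof.
move=> le_ad; exists (enum_rank (BMultinom (le_ad : mdeg a < d.+1)%N)).
by rewrite /mon enum_rankK.
Qed.

Lemma mdeg_split (b : 'X_{1..n}) d1 d2 : (mdeg b <= d1 + d2)%N ->
  exists a1 a2, [/\ b = (a1 + a2)%MM, (mdeg a1 <= d1)%N & (mdeg a2 <= d2)%N].
Proof.
elim: d1 b => [|d1 IH] b le_b.
  by exists 0%MM, b; rewrite add0m mdeg0.
have [le_b2|lt_b2] := leqP (mdeg b) d2.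
  by exists 0%MM, b; rewrite add0m mdeg0.
have [i b_i] : exists i, (0 < b i)%N.
  apply/existsP; apply: contraTT lt_b2 => /existsPn b0.
  by rewrite -leqNgt mdegE big1 // => i _; apply/eqP; rewrite -leqn0 leqNgt b0.
have bE : b = (b - U_(i) + U_(i))%MM.
  by rewrite submK //; apply/mnm_lepP => j; rewrite mnm1E; case: eqP => // <-.
have le_b' : (mdeg (b - U_(i)) <= d1 + d2)%N.
  by move: le_b; rewrite {1}bE mdegD mdeg1 addn1 addSn ltnS.
have [a1 [a2 [b'E le_a1 le_a2]]] := IH _ le_b'.
exists (a1 + U_(i))%MM, a2; split => //; last by rewrite mdegD mdeg1 addn1.
by rewrite bE b'E -addmA [(a2 + _)%MM]addmC addmA.
Qed.

End Monomials.

Section RieszFunctional.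
Variables (R : comNzRingType) (n : nat) (Y : 'X_{1..n} -> R).
Implicit Types (p q : {mpoly R[n]}).

Definition riesz p : R := \sum_(c <- msupp p) p@_c * Y c.

Lemma rieszE p i : (msize p <= i)%N ->
  riesz p = \sum_(c : 'X_{1..n < i}) p@_c * Y c.
Proof.
move=> le_pi; rewrite /riesz (big_mksub 'X_{1..n < i}) ?msupp_uniq //=.
  by rewrite big_rmcond //= => c /memN_msupp_eq0 ->; rewrite mul0r.
by move=> c /msize_mdeg_lt /leq_trans; apply.
Qed.

Lemma riesz_is_zmod_morphism : zmod_morphism riesz.
Proof.
move=> p q; pose i := (msize p + msize q + msize (p - q))%N.
have [le_p le_q le_pq] : [/\ msize p <= i, msize q <= i & msize (p - q) <= i]%N.
  by split; rewrite /i ?leq_addl // -addnA ?leq_addr // addnCA leq_addr.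
rewrite !(@rieszE _ i) //.
by rewrite -sumrB; apply: eq_bigr => c _; rewrite mcoeffB mulrBl.
Qed.

HB.instance Definition _ :=
  GRing.isZmodMorphism.Build {mpoly R[n]} R riesz riesz_is_zmod_morphism.

Lemma rieszZ c p : riesz (c *: p) = c * riesz p.
Proof.
pose i := (msize p + msize (c *: p))%N.
rewrite !(@rieszE _ i) ?/i ?leq_addl ?leq_addr // mulr_sumr.
by apply: eq_bigr => a _; rewrite mcoeffZ mulrA.
Qed.

Lemma rieszX a : riesz 'X_[a] = Y a.
Proof. by rewrite /riesz msuppX big_seq1 mcoeffX eqxx mul1r. Qed.

Lemma rieszC c : riesz c%:MP = c * Y 0%MM.
Proof. by rewrite -[c%:MP]mulr1 mul_mpolyC -mpolyX0 rieszZ rieszX. Qed.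

Lemma riesz_mulX q a :
  riesz (q * 'X_[a]) = \sum_(c <- msupp q) q@_c * Y (a + c)%MM.
Proof.
rewrite {1}(mpolyE q) mulr_suml raddf_sum; apply: eq_bigr => c _.
by rewrite /= -scalerAl -mpolyXD rieszZ rieszX addmC.
Qed.

End RieszFunctional.

Lemma mxtrace_diag_sandwich (R : comPzSemiRingType) s (d : 'rV[R]_s) (M : 'M[R]_s) :
  \tr (diag_mx d *m M *m diag_mx d) = \sum_a d 0 a ^+ 2 * M a a.
Proof.
rewrite mul_mx_diag mul_diag_mx /mxtrace; apply: eq_bigr => a _.
by rewrite !mxE expr2 mulrAC.
Qed.

Lemma mxtrace_mxdiag_sandwich (R : pzSemiRingType) p (p_ : 'I_p -> nat)
    (S M : forall i, 'M[R]_(p_ i)) :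
  \tr (\mxdiag_i S i *m \mxdiag_i M i *m \mxdiag_i S i) =
  \sum_i \tr (S i *m M i *m S i).
Proof.
rewrite {2}/mxdiag mul_mxdiag_mxblock mul_mxblock_mxdiag mxtrace_mxblock.
by apply: eq_bigr => i _; rewrite eqxx conform_mx_id.
Qed.

Section DiagonalMatrices.
Variable R : rcfType.

Lemma psd_sub1_diag_ge1 s (A : 'M[R]_s) a : psd (A - 1%:M) -> 1 <= A a a.
Proof.
case=> _ /(_ (delta_mx a 0)).
by rewrite trmx_delta -rowE -colE !mxE eqxx mulr1n subr_ge0.
Qed.

Lemma pd_diag_mx s (w : 'rV[R]_s) : (forall j, 0 < w 0 j) -> pd (diag_mx w).
Proof.
move=> w_gt0; split=> [|v /eqP v_neq0]; first exact: tr_diag_mx.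
have [j vj_neq0] : exists j, v j 0 != 0.
  apply/existsP; apply: contra_notT v_neq0 => /existsPn v0.
  by apply/matrixP => i k; rewrite ord1 mxE; apply/eqP/negPn.
have sq_ge0 i : 0 <= v i 0 * w 0 i * v i 0.
  by rewrite mulrAC -expr2 mulr_ge0 ?sqr_ge0 ?ltW.
rewrite mul_mx_diag mxE (bigD1 j) //= ltr_pwDl ?sumr_ge0 // => [|i _]; rewrite !mxE //.
by rewrite mulrAC -expr2 mulr_gt0 // lt0r sqrf_eq0 vj_neq0 sqr_ge0.
Qed.

Lemma mxtrace_sqrt_diag_sandwich s (G M : 'M[R]_s) : (forall a, 0 <= G a a) ->
  \tr (sqrt_diag G *m M *m sqrt_diag G) = \sum_a G a a * M a a.
Proof.
move=> G_ge0; rewrite mxtrace_diag_sandwich.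
by apply: eq_bigr => a _; rewrite mxE sqr_sqrtr.
Qed.

End DiagonalMatrices.

Section QuadraticForms.
Variables (R : rcfType) (n d : nat) (G : 'M[R]_(sdim n d)).
Hypothesis G_diag : is_diag_mx G.

Lemma quadp_diag : quadp G = \sum_a G a a *: 'X_[mon a + mon a].
Proof.
apply: eq_bigr => a _; rewrite (bigD1 a) //= big1 ?addr0 // => b b_neq_a.
by rewrite (is_diag_mxP G_diag) ?scale0r // eq_sym.
Qed.

Lemma meval_quadp_diag x :
  (quadp G).@[x] = \sum_a G a a * 'X_[mon a].@[x] ^+ 2.
Proof.
rewrite quadp_diag raddf_sum; apply: eq_bigr => a _.
by rewrite /= mevalZ mpolyXD mevalM expr2.
Qed.

Lemma meval_quadp_diag_ge0 x : (forall a, 0 <= G a a) -> 0 <= (quadp G).@[x].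
Proof.
by move=> G_ge0; rewrite meval_quadp_diag sumr_ge0 // => a _; rewrite mulr_ge0 ?sqr_ge0.
Qed.

Lemma meval_quadp_diag_ge1 x : (forall a, 1 <= G a a) -> 1 <= (quadp G).@[x].
Proof.
move=> G_ge1; have G_ge0 a : 0 <= G a a by apply: le_trans (G_ge1 a).
have [a0 a0E] : exists a0 : 'I_(sdim n d), mon a0 = 0%MM.
  by apply: mon_surj; rewrite mdeg0.
rewrite meval_quadp_diag (bigD1 a0) //= a0E mpolyX0 meval1 expr1n mulr1.
rewrite (le_trans (G_ge1 a0)) // lerDl sumr_ge0 // => a _.
by rewrite mulr_ge0 ?sqr_ge0.
Qed.

Variables (k : nat) (y : 'X_{1..n < (2 * k).+1} -> R) (q : {mpoly R[n]}).

Lemma riesz_mul_quadp_diag :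
  riesz (yext y) (q * quadp G) = \sum_a G a a * locmx y d q a a.
Proof.
rewrite quadp_diag mulr_sumr raddf_sum; apply: eq_bigr => a _.
by rewrite /= -scalerAr rieszZ riesz_mulX mxE.
Qed.

End QuadraticForms.

Lemma riesz_mul_linp_eq0 (R : rcfType) n k (y : 'X_{1..n < (2 * k).+1} -> R) d
    (q : {mpoly R[n]}) (v : 'cV[R]_(sdim n (2 * d))) :
  locmx y d q = 0 -> riesz (yext y) (q * linp v) = 0.
Proof.
move=> locmx0; rewrite mulr_sumr raddf_sum big1 // => b _.
rewrite /= -scalerAr rieszZ riesz_mulX.
have [a1 [a2 [-> le_a1 le_a2]]] : exists a1 a2,
    [/\ mon b = (a1 + a2)%MM, (mdeg a1 <= d)%N & (mdeg a2 <= d)%N].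
  by apply: mdeg_split; rewrite addnn -mul2n mdeg_mon.
have [[i1 <-] [i2 <-]] := (mon_surj le_a1, mon_surj le_a2).
by have /matrixP/(_ i1 i2) := locmx0; rewrite !mxE => ->; rewrite mulr0.
Qed.

Section Feasibility.
Variables (R : rcfType) (n m l : nat).
Variables (g : 'I_m -> {mpoly R[n]}) (h : 'I_l -> {mpoly R[n]}).
Variables (k : nat) (xi : R) (G : forall i : 'I_m.+1, 'M[R]_(sdim n (k - cg g i))).
Variable u : forall j : 'I_l, 'cV[R]_(sdim n (2 * (k - hdeg (h j)))).
Hypothesis feasible : LP_feasible g h k xi G u.

Lemma LP_feasible_diag_ge1 i a : 1 <= G i a a.
Proof. by case: feasible => _ /(_ i) /psd_sub1_diag_ge1. Qed.

Lemma LP_feasible_diag_ge0 i a : 0 <= G i a a.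
Proof. exact: le_trans ler01 (LP_feasible_diag_ge1 a). Qed.

Lemma LP_feasible_gt0 x :
  (forall i, 0 <= (g i).@[x]) -> (forall j, (h j).@[x] = 0) -> 0 < xi.
Proof.
move=> g_ge0 h0; case: feasible => G_diag _ /(congr1 (meval x)).
rewrite mevalC raddfD !raddf_sum /= [\sum_(j < l) _]big1 => [|j _]; last first.
  by rewrite mevalM h0 mul0r.
rewrite addr0 big_ord_recl /gx unlift_none mul1r => ->.
have G0_ge1 : 1 <= (quadp (G ord0)).@[x].
  by apply: meval_quadp_diag_ge1 => // a; apply: LP_feasible_diag_ge1.
have gG_ge0 i : 0 <= (g i * quadp (G (lift ord0 i))).@[x].
  rewrite mevalM mulr_ge0 ?meval_quadp_diag_ge0 // => a.
  exact: LP_feasible_diag_ge0.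
apply: lt_le_trans ltr01 (le_trans G0_ge1 _).
by rewrite lerDl sumr_ge0 // => i _; rewrite liftK.
Qed.

Lemma LP_feasible_pd : pd (\mxdiag_(i < m.+1) sqrt_diag (G i)).
Proof.
rewrite /sqrt_diag -diag_mxrow; apply: pd_diag_mx => a.
by rewrite !mxE sqrtr_gt0 (lt_le_trans ltr01 (LP_feasible_diag_ge1 _)).
Qed.

Lemma LP_feasible_trace (y : 'X_{1..n < (2 * k).+1} -> R) :
  (forall j, locmx y (k - hdeg (h j)) (h j) = 0) -> yext y 0%MM = 1 ->
  \tr (\mxdiag_(i < m.+1) sqrt_diag (G i) *m Dmx g y *m
       \mxdiag_(i < m.+1) sqrt_diag (G i)) = xi.
Proof.
move=> h_loc0 y0; case: feasible => G_diag _ /(congr1 (riesz (yext y))).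
rewrite rieszC y0 mulr1 raddfD !raddf_sum /= [\sum_(j < l) _]big1 => [|j _];
  last exact: riesz_mul_linp_eq0.
rewrite addr0 => ->; rewrite mxtrace_mxdiag_sandwich; apply: eq_bigr => i _.
rewrite mxtrace_sqrt_diag_sandwich ?riesz_mul_quadp_diag //.
exact: LP_feasible_diag_ge0.
Qed.

End Feasibility.

Theorem lemma2 (R : rcfType) (n m l : nat) (f : {mpoly R[n]})
    (g : 'I_m -> {mpoly R[n]}) (h : 'I_l -> {mpoly R[n]})
    (xi : nat -> R)
    (G : forall (k : nat) (i : 'I_m.+1), 'M[R]_(sdim n (k - cg g i)))
    (u : forall (k : nat) (j : 'I_l), 'cV[R]_(sdim n (2 * (k - hdeg (h j))))) :
  (exists x : 'I_n -> R,
      (forall i, 0 <= (g i).@[x]) /\ (forall j, (h j).@[x] = 0)) ->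
  (forall k, (kmin f g h <= k)%N -> LP_feasible g h k (xi k) (G k) (u k)) ->
  CTP f g h xi (fun k => \mxdiag_(i < m.+1) sqrt_diag (G k i)).
Proof.
move=> [x [g_ge0 h0]] feasible k le_kmin_k; have LPk := feasible k le_kmin_k.
split.
- exact: (LP_feasible_gt0 LPk g_ge0 h0).
- exact: LP_feasible_pd LPk.
- exact: LP_feasible_trace LPk.
Qed.
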